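(* Let \(G=(V,E)\) be a split graph with clique \(C\) and independent set \(I\) (so \(V=C\cup I\), disjointly), and let \(\sigma=(v_1,\dots,v_n)\) be an MNS ordering of \(V\). Then for every pair of vertices \(v_i\in I\) and \(v_j\in C\) with \(j>i\), the following hold, where \(l:=|\{v_1,\dots,v_{i-1}\}\cap C|\): (1) \(\{v_1,\dots,v_{i-1}\}\cap C\subseteq N(v_i)\); (2) \(\{v_{i+1},\dots,v_{i+\deg(v_i)-l}\}\subseteq N(v_i)\).
   Context: \(N(v)\) is the neighborhood of \(v\) and \(\deg(v)=|N(v)|\). An MNS (Maximum Neighborhood Search) ordering is a vertex ordering produced as follows for some start vertex \(s\) and some tie-breaking: all vertices get label \(\emptyset\), then \(s\) gets label \(\{n+1\}\); for \(i=1,\dots,n\), pick an unnumbered vertex whose label is maximal under set inclusion among the labels of unnumbered vertices, set it as \(v_i\), and add \(i\) to the label of each unnumbered neighbor of it. *)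

From mathcomp Require Import all_boot.
Set Implicit Arguments. Unset Strict Implicit. Unset Printing Implicit Defensive.

Definition simple_graph (T : finType) (e : rel T) : Prop :=
  symmetric e /\ irreflexive e.

Definition nbhd (T : finType) (e : rel T) (v : T) : {set T} := [set u | e v u].
Definition deg (T : finType) (e : rel T) (v : T) : nat := #|nbhd e v|.

Definition split_partition (T : finType) (e : rel T) (C I : {set T}) : Prop :=
  [/\ C :&: I = set0, C :|: I = [set: T],
      (forall x y, x \in C -> y \in C -> x != y -> e x y)
    & (forall x y, x \in I -> y \in I -> ~~ e x y)].

(* Orderings are #|T|-tuples; position k : 'I_#|T| (0-based) is the vertex
   v_(k+1) of the paper.  The label of vertex x just before v_(k+1) is chosen
   (i.e. after v_1..v_k got their numbers 1..k) is the set of numbers m such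
   that m = p+1 with p < k and v_(p+1) adjacent to x, plus n+1 if x = s. *)
Definition mns_label (T : finType) (e : rel T) (s : T)
    (sigma : #|T|.-tuple T) (k : nat) (x : T) : pred nat :=
  fun m => [exists p : 'I_#|T|, (p < k) && (m == p.+1) && e (tnth sigma p) x]
           || ((x == s) && (m == #|T|.+1)).

Definition label_sub (L1 L2 : pred nat) : Prop := forall m, L1 m -> L2 m.
Definition label_psub (L1 L2 : pred nat) : Prop :=
  label_sub L1 L2 /\ exists m, L2 m && ~~ L1 m.

Definition is_MNS (T : finType) (e : rel T) (sigma : #|T|.-tuple T) : Prop :=
  uniq sigma /\
  exists s : T, forall (k : 'I_#|T|) (u : T),
    u \notin take k sigma ->
    ~ label_psub (mns_label e s sigma k (tnth sigma k)) (mns_label e s sigma k u).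

From mathcomp Require Import all_boot.
From mathcomp Require Import zify.

Set Implicit Arguments.
Unset Strict Implicit.
Unset Printing Implicit Defensive.

(* Label maximality in an MNS ordering says: if every earlier neighbour of
   v_k (k > 1; v_1 is the start vertex) is adjacent to a later vertex v_q,
   then every earlier neighbour of v_q is adjacent to v_k.  In a split graph
   the earlier neighbours of an independent vertex v_i lie in the clique,
   hence are adjacent to every later clique vertex; this gives (1), and shows
   that no earlier independent vertex sees a clique vertex after v_i.  For
   (2), suppose v_i is adjacent to v_(i+1), ..., v_(p-1).  Counting shows
   that v_i still has a neighbour v_q with q >= p; every earlier neighbour of
   v_p is then v_i or a clique vertex, hence adjacent to v_q, so v_i ~ v_p. *)

Lemma card_ord_range n (a b : nat) : #|[set r : 'I_n | a <= r < b]| <= b - a.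
Proof.
rewrite cardE -(size_map val) -[b - a](size_iota a); apply: uniq_leq_size.
  by rewrite (map_inj_uniq val_inj) enum_uniq.
move=> x /mapP [r]; rewrite mem_enum inE => /andP [ar rb] ->.
by rewrite mem_iota ar subnKC // (leq_trans ar (ltnW rb)).
Qed.

Section MNSOrdering.

Variables (T : finType) (e : rel T) (sigma : #|T|.-tuple T) (s : T).
Hypothesis sigma_uniq : uniq sigma.
Hypothesis sigma_max : forall (k : 'I_#|T|) (u : T), u \notin take k sigma ->
  ~ label_psub (mns_label e s sigma k (tnth sigma k)) (mns_label e s sigma k u).

Local Notation v := (tnth sigma).

Definition mns_prefix (k : nat) : {set T} := [set v p | p : 'I_#|T| & p < k].

Lemma mns_inj : injective v.
Proof. exact/tuple_uniqP. Qed.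

Lemma mem_take_mns (q k : 'I_#|T|) : (v q \in take k sigma) = (q < k).
Proof.
by rewrite in_take ?mem_tnth // (tnth_nth (v q)) index_uniq // size_tuple.
Qed.

Lemma mns_labelE (k : nat) (x : T) (m : nat) : x != s ->
  mns_label e s sigma k x m =
  [exists p : 'I_#|T|, (p < k) && (m == p.+1) && e (v p) x].
Proof. by move/negbTE => xs; rewrite /mns_label xs orbF. Qed.

Lemma mns_start_first (k : 'I_#|T|) : 0 < k -> v k != s.
Proof.
move=> k_gt0; apply/eqP => vk_s.
pose k0 := Ordinal (leq_ltn_trans (leq0n k) (ltn_ord k)).
have v0_s : v k0 != s.
  by rewrite -vk_s; apply: contraTneq k_gt0 => /mns_inj <-.
apply: (@sigma_max k0 s); first by rewrite take0.
split=> [m|]; first by rewrite mns_labelE // => /existsP [].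
exists #|T|.+1; rewrite [X in ~~ X]mns_labelE // /mns_label !eqxx orbT /=.
by apply/existsP => -[p].
Qed.

Lemma mns_prefix_nbhd_maximal (k q : 'I_#|T|) : 0 < k -> k <= q ->
    (forall p : 'I_#|T|, p < k -> e (v p) (v k) -> e (v p) (v q)) ->
  forall p : 'I_#|T|, p < k -> e (v p) (v q) -> e (v p) (v k).
Proof.
move=> k_gt0 le_kq sub_kq p lt_pk epq; apply/negPn/negP => nepk.
apply: (@sigma_max k (v q)); first by rewrite mem_take_mns -leqNgt.
have vk_s := mns_start_first k_gt0; split=> [m|].
  rewrite mns_labelE // => /existsP [r /andP [/andP [lt_rk m_r] erk]].
  by apply/orP; left; apply/existsP; exists r; rewrite lt_rk m_r sub_kq.
exists p.+1; rewrite [X in ~~ X]mns_labelE //; apply/andP; split.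
  by apply/orP; left; apply/existsP; exists p; rewrite lt_pk eqxx.
by apply/existsP => -[r /andP [/andP [_ /eqP [/val_inj <-]]]]; apply/negP.
Qed.

Section SplitGraph.

Variables (C I : {set T}).
Hypotheses (e_sym : symmetric e) (e_irr : irreflexive e).
Hypothesis splitCI : split_partition e C I.

Lemma split_memI x : x \notin C -> x \in I.
Proof.
case: splitCI => _ CIT _ _ xC.
by have := in_setT x; rewrite -CIT inE (negbTE xC).
Qed.

Lemma split_memC x : x \in I -> x \notin C.
Proof.
case: splitCI => CI0 _ _ _ xI; apply/negP => xC.
by have := in_set0 x; rewrite -CI0 inE xC xI.
Qed.

Lemma split_nbhdI x y : x \in I -> e x y -> y \in C.
Proof.
case: splitCI => _ _ _ Iind xI; apply: contraTT => yC.
exact: Iind xI (split_memI yC).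
Qed.

Lemma split_adjC (p q : 'I_#|T|) : p != q -> v p \in C -> v q \in C ->
  e (v p) (v q).
Proof.
case: splitCI => _ _ Ccl _ pq Cp Cq; apply: Ccl => //.
by apply: contra pq => /eqP /mns_inj ->.
Qed.

Lemma mns_split_prefix (i q r : 'I_#|T|) : v i \in I -> i <= q -> v q \in C ->
  r < i -> e (v r) (v q) -> e (v r) (v i).
Proof.
move=> Ii le_iq Cq lt_ri; apply: mns_prefix_nbhd_maximal => //.
  exact: leq_ltn_trans lt_ri.
move=> p lt_pi epi; apply: split_adjC => //.
  by rewrite neq_ltn (leq_trans lt_pi le_iq).
by rewrite (split_nbhdI Ii) // e_sym.
Qed.

Lemma split_deg_le (i p : 'I_#|T|) : v i \in I ->
    (forall q : 'I_#|T|, p <= q -> ~~ e (v i) (v q)) ->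
  deg e (v i) <= #|mns_prefix i :&: C| + (p - i.+1).
Proof.
move=> Ii no_late.
pose mid := [set r : 'I_#|T| | i.+1 <= r < p].
have sub : nbhd e (v i) \subset (mns_prefix i :&: C) :|: [set v r | r in mid].
  apply/subsetP => x; rewrite inE => eix.
  have /codomP [r xr] : x \in codom v.
    by apply: (inj_card_onto mns_inj); rewrite card_ord.
  move: eix; rewrite {x}xr => eir.
  have lt_rp : r < p by rewrite ltnNge; apply: contraL eir; exact: no_late.
  rewrite !inE (split_nbhdI Ii eir) andbT.
  case: (ltngtP r i) => [lt_ri | lt_ir | /val_inj ri].
  - by apply/orP; left; apply: imset_f; rewrite inE.
  - by apply/orP; right; apply: imset_f; rewrite inE lt_ir.
  - by move: eir; rewrite ri e_irr.
apply: leq_trans (subset_leq_card sub) _.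
apply: leq_trans (leq_card_setU _ _) _; rewrite leq_add2l.
exact: leq_trans (leq_imset_card _ _) (card_ord_range _ _ _).
Qed.

Lemma mns_split_nbhd_step (i p : 'I_#|T|) : v i \in I -> i < p ->
    (forall r : 'I_#|T|, i < r < p -> e (v i) (v r)) ->
    p <= i + (deg e (v i) - #|mns_prefix i :&: C|) ->
  e (v i) (v p).
Proof.
move=> Ii lt_ip before bound.
have [q le_pq eiq] : exists2 q : 'I_#|T|, p <= q & e (v i) (v q).
  case: (pickP [pred q : 'I_#|T| | (p <= q) && e (v i) (v q)]).
    by move=> q /andP [le_pq eiq]; exists q.
  move=> none; have no_late (q : 'I_#|T|) : p <= q -> ~~ e (v i) (v q).
    by move=> le_pq; have := none q; rewrite /= le_pq => /negbT.
  by have := split_deg_le Ii no_late; lia.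
apply: (@mns_prefix_nbhd_maximal p q) => //; first exact: leq_ltn_trans lt_ip.
move=> r lt_rp erp; have [Cr | /split_memI Ir] := boolP (v r \in C).
  apply: split_adjC => //; last exact: split_nbhdI eiq.
  by rewrite neq_ltn (leq_trans lt_rp le_pq).
have Cp := split_nbhdI Ir erp.
case: (ltngtP r i) => [lt_ri | lt_ir | /val_inj -> //].
  have Ci := split_nbhdI Ir (mns_split_prefix Ii (ltnW lt_ip) Cp lt_ri erp).
  by have := split_memC Ii; rewrite Ci.
have Cr : v r \in C by apply: split_nbhdI Ii (before r _); rewrite lt_ir.
by have := split_memC Ir; rewrite Cr.
Qed.

Lemma mns_split_nbhd_after (i p : 'I_#|T|) : v i \in I ->
    i < p <= i + (deg e (v i) - #|mns_prefix i :&: C|) ->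
  e (v i) (v p).
Proof.
move=> Ii; have [n lt_pn] := ubnP p; elim: n => // n IH in p lt_pn *.
move=> /andP [lt_ip bound].
apply: mns_split_nbhd_step => // r /andP [lt_ir lt_rp].
apply: IH; first exact: leq_trans lt_rp lt_pn.
by rewrite lt_ir (leq_trans (ltnW lt_rp) bound).
Qed.

End SplitGraph.
End MNSOrdering.

Theorem lemma15 (T : finType) (e : rel T) (C I : {set T})
    (sigma : #|T|.-tuple T) :
  simple_graph e -> split_partition e C I -> is_MNS e sigma ->
  forall i j : 'I_#|T|, i < j -> tnth sigma i \in I -> tnth sigma j \in C ->
  let l := #|[set tnth sigma p | p : 'I_#|T| & p < i] :&: C| in
  (forall p : 'I_#|T|, p < i -> tnth sigma p \in C ->
     tnth sigma p \in nbhd e (tnth sigma i)) /\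
  (forall p : 'I_#|T|, i < p <= i + (deg e (tnth sigma i) - l) ->
     tnth sigma p \in nbhd e (tnth sigma i)).
Proof.
move=> [e_sym e_irr] splitCI [sigma_uniq [s sigma_max]] i j lt_ij Ii Cj l.
split=> [p lt_pi Cp | p range_p]; rewrite inE.
  rewrite e_sym.
  apply: (mns_split_prefix sigma_uniq sigma_max e_sym splitCI Ii (ltnW lt_ij));
    rewrite // (split_adjC sigma_uniq splitCI) //.
  by rewrite neq_ltn (ltn_trans lt_pi lt_ij).
exact: (mns_split_nbhd_after sigma_uniq sigma_max e_sym e_irr splitCI Ii).
Qed.
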